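(* Let $A$ be a totally ordered alphabet, $F(A)$ the free group on $A$, and $\ell\in A$. If $g\in F(A)$ is a palindrome, then $\lambda_\ell(g)\ell$ is a palindrome and $\ell\rho_\ell(g)$ is a palindrome.
   Context: The reversal $g\mapsto\tilde g$ is the unique anti-automorphism of $F(A)$ with $\tilde a=a$ for all $a\in A$; a palindrome is an element $g$ with $\tilde g=g$. For $\ell\in A$, $\lambda_\ell$ and $\rho_\ell$ are the automorphisms of $F(A)$ defined on letters $a\in A$ by: $\lambda_\ell(a)=a\ell^{-1}$ if $a<\ell$, $\lambda_\ell(\ell)=\ell$, $\lambda_\ell(a)=\ell a$ if $a>\ell$; and $\rho_\ell(a)=a\ell$ if $a<\ell$, $\rho_\ell(\ell)=\ell$, $\rho_\ell(a)=\ell^{-1}a$ if $a>\ell$. *)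

(* Free group F(A) on a totally ordered alphabet A, modelled by
   freely reduced words over A^{+-1}; group equality = equality of reduced words. *)
From HB Require Import structures.
From mathcomp Require Import all_boot all_order.
Set Implicit Arguments. Unset Strict Implicit. Unset Printing Implicit Defensive.
Import Order.TTheory.
Local Open Scope order_scope.

Section FreeGroup.
Variables (d : Order.disp_t) (A : orderType d).

(* a letter (a, true) is a, a letter (a, false) is a^-1 *)
Definition letter := (A * bool)%type.
Definition linv (x : letter) : letter := (x.1, ~~ x.2).

Fixpoint reduced (w : seq letter) : bool :=
  match w with
  | x :: ((y :: _) as w') => (y != linv x) && reduced w'
  | _ => true
  end.

Fixpoint red_acc (st w : seq letter) : seq letter :=
  match w with
  | [::] => rev st
  | x :: w' =>
      match st with
      | y :: st' => if y == linv x then red_acc st' w' else red_acc (x :: st) w'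
      | [::] => red_acc [:: x] w'
      end
  end.
Definition red (w : seq letter) := red_acc [::] w.

Definition fmul (u v : seq letter) := red (u ++ v).
Definition finv (u : seq letter) := rev (map linv u).
Definition gen (a : A) : seq letter := [:: (a, true)].

Definition limg (f : A -> seq letter) (x : letter) :=
  if x.2 then f x.1 else finv (f x.1).
Definition ext_hom (f : A -> seq letter) (w : seq letter) :=
  red (flatten (map (limg f) w)).
Definition ext_antihom (f : A -> seq letter) (w : seq letter) :=
  red (flatten (rev (map (limg f) w))).

Definition reversal (g : seq letter) := ext_antihom gen g.
Definition palindrome (g : seq letter) := reversal g = g.

Definition lambda_img (l a : A) : seq letter :=
  if a < l then [:: (a, true); (l, false)]
  else if a == l then [:: (l, true)]
  else [:: (l, true); (a, true)].
Definition rho_img (l a : A) : seq letter :=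
  if a < l then [:: (a, true); (l, true)]
  else if a == l then [:: (l, true)]
  else [:: (l, false); (a, true)].
Definition lambda (l : A) := ext_hom (lambda_img l).
Definition rho (l : A) := ext_hom (rho_img l).

End FreeGroup.

(* Reversal is an anti-automorphism, so for a palindrome g = x_1 ... x_n the
   reversal of lambda_l(g) l is l rev(lambda_l x_1) ... rev(lambda_l x_n).
   Each generator and its inverse satisfies l rev(lambda_l x) = lambda_l(x) l in
   F(A), so l can be moved across the whole product, giving lambda_l(g) l back.
   Symmetrically, l rho_l(x) = rev(rho_l x) l handles l rho_l(g). *)
From mathcomp Require Import all_boot all_order.
Set Implicit Arguments. Unset Strict Implicit. Unset Printing Implicit Defensive.
Import Order.TTheory.

Section FreeReduction.
Variables (d : Order.disp_t) (A : orderType d).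
Local Notation letter := (letter A).
Implicit Types (x y : letter) (u v w st g : seq letter) (f : A -> seq letter).

Lemma linvK : involutive (@linv _ A).
Proof. by case=> a []. Qed.

Lemma eq_linv_sym x y : (x == linv y) = (y == linv x).
Proof. by apply/eqP/eqP => ->; rewrite linvK. Qed.

Definition push x st : seq letter :=
  if st is y :: st' then (if y == linv x then st' else x :: st) else [:: x].

Definition pushes st w := foldl (fun s x => push x s) st w.

Lemma red_accE st w : red_acc st w = rev (pushes st w).
Proof. by elim: w st => [|x w IH] [|y st] //=; rewrite IH //; case: ifP. Qed.

Lemma redE w : red w = rev (pushes [::] w).
Proof. exact: red_accE. Qed.

Lemma reduced_push x st : reduced st -> reduced (push x st).
Proof.
case: st => [|y st] //= st_red; case: ifP => [_|/negbT y_neq]; last by rewrite /= y_neq.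
by case: st st_red => // z st /andP[].
Qed.

Lemma reduced_pushes st w : reduced st -> reduced (pushes st w).
Proof. by elim: w st => [|x w IH] st //= st_red; apply/IH/reduced_push. Qed.

Lemma push_linvK x st : reduced st -> push (linv x) (push x st) = st.
Proof.
case: st => [|y st] /=; first by rewrite linvK eqxx.
case: ifP => [/eqP ->|_]; last by rewrite /= linvK eqxx.
case: st => [|z st] //= /andP[z_neq _]; rewrite linvK.
by case: ifP => // /eqP z_eq; rewrite z_eq linvK eqxx in z_neq.
Qed.

Lemma red_cancel u x v : red (u ++ x :: linv x :: v) = red (u ++ v).
Proof.
rewrite !redE /pushes !foldl_cat /= push_linvK //.
exact: (@reduced_pushes [::]).
Qed.

Lemma red_cancel' u x v : red (u ++ linv x :: x :: v) = red (u ++ v).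
Proof. by rewrite -{2}(linvK x) red_cancel. Qed.

Lemma red_cat_rev_pushes u st w v :
  red (u ++ rev (pushes st w) ++ v) = red (u ++ rev st ++ w ++ v).
Proof.
elim: w st u => [|x w IH] st u //=; rewrite IH.
case: st => [|y st] //=; case: ifP => [/eqP ->|_].
  by rewrite rev_cons cat_rcons !catA red_cancel' !catA.
by rewrite [rev (x :: _)]rev_cons cat_rcons.
Qed.

Lemma red_cat_pushes u st w v :
  red (u ++ pushes st w ++ v) = red (u ++ rev w ++ st ++ v).
Proof.
elim: w st u => [|x w IH] st u //=.
rewrite IH rev_cons -cats1 -!catA /=; case: st => [|y st] //=.
by case: ifP => [/eqP ->|_] //; rewrite !catA red_cancel !catA.
Qed.

Lemma red_cat_red u w v : red (u ++ red w ++ v) = red (u ++ w ++ v).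
Proof. by rewrite [red w]redE red_cat_rev_pushes. Qed.

Lemma red_rev_red u w v : red (u ++ rev (red w) ++ v) = red (u ++ rev w ++ v).
Proof. by rewrite [red w]redE revK red_cat_pushes. Qed.

Lemma red_congr u s t v : red s = red t -> red (u ++ s ++ v) = red (u ++ t ++ v).
Proof. by move=> st_eq; rewrite -red_cat_red st_eq red_cat_red. Qed.

Lemma reduced_rcons w x :
  reduced (rcons w x) = reduced w && (if w is [::] then true else x != linv (last x w)).
Proof.
elim: w => [|y w IH] //=; case: w IH => [|z w] IH /=; first by rewrite andbT.
by move: IH; rewrite /= => ->; rewrite andbA.
Qed.

Lemma reduced_rev w : reduced (rev w) = reduced w.
Proof.
elim: w => [|x w IH] //; rewrite rev_cons reduced_rcons IH.
case: w IH => [|y w] IH //; rewrite rev_cons last_rcons.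
by case: (rev w) => [|? ?] /=; rewrite -/(reduced (y :: w)) eq_linv_sym andbC.
Qed.

Lemma pushes_reduced st w : reduced w ->
  (if w is x :: _ then (if st is y :: _ then y != linv x else true) else true) ->
  pushes st w = catrev w st.
Proof.
elim: w st => [|x w IH] st //= w_red st_w.
have -> : push x st = x :: st by case: st st_w => [|y st] //= /negbTE ->.
apply: IH; case: w w_red => // z w /andP[zx _] //.
by rewrite eq_linv_sym.
Qed.

Lemma red_reduced w : reduced w -> red w = w.
Proof. by move=> w_red; rewrite redE pushes_reduced ?revK //; case: w w_red. Qed.

Lemma red_intertwine p (f1 f2 : letter -> seq letter) :
  (forall x, red (p ++ f1 x) = red (f2 x ++ p)) ->
  forall g, red (p ++ flatten (map f1 g)) = red (flatten (map f2 g) ++ p).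
Proof.
move=> f12; elim=> [|x g IH] /=; first by rewrite cats0.
have := red_congr [::] (flatten (map f1 g)) (f12 x); rewrite /= -!catA => ->.
by have := red_congr (f2 x) [::] IH; rewrite !cats0.
Qed.

Lemma fmul_redl u v : fmul (red u) v = fmul u v.
Proof. exact: red_cat_red [::] u v. Qed.

Lemma fmul_redr u v : fmul u (red v) = fmul u v.
Proof. by have := red_cat_red u v [::]; rewrite !cats0. Qed.

Lemma reversalE g : reversal g = red (rev g).
Proof.
rewrite /reversal /ext_antihom; congr red.
elim: g => [|[a b] g IH] //=.
by rewrite rev_cons -cats1 flatten_cat IH /= cats0 rev_cons -cats1; case: b.
Qed.

Lemma reversal_gen (a : A) : reversal (gen a) = gen a.
Proof. by []. Qed.

Lemma reversal_fmul u v : reversal (fmul u v) = fmul (reversal v) (reversal u).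
Proof.
have := red_rev_red [::] (u ++ v) [::].
by rewrite !reversalE !cats0 /= => ->; rewrite fmul_redl fmul_redr rev_cat.
Qed.

Lemma reversal_ext_hom f g :
  reversal (ext_hom f g) = red (flatten (map (rev \o limg f) (rev g))).
Proof.
have := red_rev_red [::] (flatten (map (limg f) g)) [::].
by rewrite reversalE !cats0 /= => ->; rewrite rev_flatten -map_comp map_rev.
Qed.

Lemma palindrome_rev g : reduced g -> palindrome g -> rev g = g.
Proof.
by move=> g_red; rewrite /palindrome reversalE red_reduced // reduced_rev.
Qed.

Lemma red_cancel_swap x w :
  red (x :: linv x :: w) = red (w ++ [:: linv x; x]).
Proof. by rewrite (red_cancel [::]) -[w]cats0 -catA red_cancel'. Qed.

Lemma lambda_limg_commute (l : A) x :
  red (gen l ++ rev (limg (lambda_img l) x)) = red (limg (lambda_img l) x ++ gen l).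
Proof.
case: x => a []; rewrite /limg /lambda_img /finv /=.
all: case: ltgtP => _ //=; exact: (red_cancel_swap (l, true)).
Qed.

Lemma rho_limg_commute (l : A) x :
  red (gen l ++ limg (rho_img l) x) = red (rev (limg (rho_img l) x) ++ gen l).
Proof.
case: x => a []; rewrite /limg /rho_img /finv /=.
all: case: ltgtP => _ //=; exact: (red_cancel_swap (l, true)).
Qed.

End FreeReduction.

Theorem lemma4p1 (d : Order.disp_t) (A : orderType d) (l : A) (g : seq (letter A)) :
  reduced g -> palindrome g ->
  palindrome (fmul (lambda l g) (gen l)) /\ palindrome (fmul (gen l) (rho l g)).
Proof.
move=> g_red g_pal; have rev_g := palindrome_rev g_red g_pal.
rewrite /palindrome !reversal_fmul reversal_gen !reversal_ext_hom rev_g.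
rewrite fmul_redl fmul_redr /lambda /rho /ext_hom fmul_redl fmul_redr /fmul.
split.
- exact: red_intertwine (lambda_limg_commute l) g.
- by rewrite (red_intertwine (rho_limg_commute l)).
Qed.
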